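(* Let $\mathfrak{g}_0$ be the noncompact real form of $\mathfrak{g}_2$ with $\mathfrak{k}_0=\mathfrak{su}(2)\oplus\mathfrak{su}(2)$, and let $\rho_1=(-1,-2,3)$, $\rho_2=(1,-3,2)$, $\rho_3=(2,-3,1)$. The admissible $\Theta$-stable parabolic subalgebras $\mathfrak{q}$ of $\mathfrak{g}$ with $\mathfrak{l}_0$ having no compact factors, their faces $\Phi_H$ and the sets $\Phi_H\cap C_\mathfrak{k}$ (the infinitesimal characters of the Dirac cohomology of $A_\mathfrak{q}$) are exactly: (a) the three Borel subalgebras with $\mathfrak{l}=\mathfrak{t}$, defined by $H=\rho_i$ ($i=1,2,3$), giving the discrete series, with $\Phi_H=\Phi_H\cap C_\mathfrak{k}=\{\rho_i\}$; (b) $\mathfrak{q}=\mathfrak{g}$ ($H=0$), giving the trivial module, with $\Phi_H\cap C_\mathfrak{k}=\{\rho_1,\rho_2,\rho_3\}$; (c) $\mathfrak{q}_1$ with $H=(1,-2,1)$ and $\mathfrak{l}=\mathfrak{t}\oplus\mathfrak{g}_{-\epsilon_1+\epsilon_3}\oplus\mathfrak{g}_{\epsilon_1-\epsilon_3}$, with $\Phi_1=\{(2,-3,1),(1,-3,2)\}$ and $\Phi_1\cap C_\mathfrak{k}=\{\rho_2,\rho_3\}$; (d) $\mathfrak{q}_2$ with $H=(0,-1,1)$ and $\mathfrak{l}=\mathfrak{t}\oplus\mathfrak{g}_{-2\epsilon_1+\epsilon_2+\epsilon_3}\oplus\mathfrak{g}_{2\epsilon_1-\epsilon_2-\epsilon_3}$,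 with $\Phi_2=\{(-1,-2,3),(1,-3,2)\}$ and $\Phi_2\cap C_\mathfrak{k}=\{\rho_1,\rho_2\}$. All these $A_\mathfrak{q}$ modules are distinguished by their Dirac cohomology.
   Context: Identify $i\mathfrak{t}_0\cong\mathfrak{t}^*_\mathbb{R}$ with $\{(x_1,x_2,x_3)\in\mathbb{R}^3: x_1+x_2+x_3=0\}$ via the standard inner product, $\mu(H)=\langle\mu,H\rangle$. The roots of $\mathfrak{g}_2$ are $\pm$ the standard positive roots $\epsilon_1-\epsilon_2,\ -\epsilon_1+\epsilon_3,\ -\epsilon_2+\epsilon_3,\ -2\epsilon_1+\epsilon_2+\epsilon_3,\ -\epsilon_1-\epsilon_2+2\epsilon_3,\ \epsilon_1-2\epsilon_2+\epsilon_3$; the Weyl group $W$ is dihedral of order 12. The compact roots are $\pm(\epsilon_1-\epsilon_2)$, $\pm(-\epsilon_1-\epsilon_2+2\epsilon_3)$, with $\Delta^+_\mathfrak{k}=\{\epsilon_1-\epsilon_2,-\epsilon_1-\epsilon_2+2\epsilon_3\}$; so $H$ is $\mathfrak{k}$-dominant iff $H_2\leq H_1\leq -H_2$, and $C_\mathfrak{k}$ is this chamber. $\rho_1,\rho_2,\rho_3$ are the half sums of positive roots of the three positive systems containing $\Delta^+_\mathfrak{k}$ ($\rho_1$ for the standard one); $\rho=\rho_1$. For $H$: $\mathfrak{l}=\mathfrak{t}\oplus\bigoplus_{\alpha(H)=0}\mathfrak{g}_\alpha$, $\mathfrak{u}=\bigoplus_{\alpha(H)>0}\mathfrak{g}_\alpha$,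 $\mathfrak{q}=\mathfrak{l}\oplus\mathfrak{u}$, admissible if $H$ is $\mathfrak{k}$-dominant; $\mathfrak{l}_0=\mathfrak{l}\cap\mathfrak{g}_0$, ''no compact factors'' means no compact simple ideal. Face $\Phi_H=\{\mu\in W\rho:\mu(H)\geq\nu(H)\ \forall\nu\in W\rho\}$. $A_\mathfrak{q}=A_\mathfrak{q}(0)$ Vogan–Zuckerman module; its Dirac cohomology consists of $\widetilde K$-types with infinitesimal characters in $\Phi_H\cap C_\mathfrak{k}$. *)

(* Combinatorial model of the root data of the
   noncompact real form of g2 used in Theorem 6.1.  Vectors of
   i t_0 ~ t^*_R are triples over an arbitrary real field R (e.g. the reals),
   lying in the plane x1+x2+x3 = 0; mu(H) = <mu,H> (standard inner product). *)
From HB Require Import structures.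
From mathcomp Require Import all_boot all_order all_algebra.
Set Implicit Arguments. Unset Strict Implicit. Unset Printing Implicit Defensive.
Import Order.TTheory GRing.Theory Num.Theory.
Local Open Scope ring_scope.

Definition v3 (R : realFieldType) : Type := (R * R * R)%type.

Definition mkv {R : realFieldType} (a b c : int) : v3 R :=
  (a%:~R, b%:~R, c%:~R).

Definition ip {R : realFieldType} (u v : v3 R) : R :=
  u.1.1 * v.1.1 + u.1.2 * v.1.2 + u.2 * v.2.

Definition vopp {R : realFieldType} (u : v3 R) : v3 R := (- u.1.1, - u.1.2, - u.2).
Definition vsub {R : realFieldType} (u v : v3 R) : v3 R :=
  (u.1.1 - v.1.1, u.1.2 - v.1.2, u.2 - v.2).
Definition vscale {R : realFieldType} (c : R) (u : v3 R) : v3 R :=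
  (c * u.1.1, c * u.1.2, c * u.2).

Definition in_t {R : realFieldType} (u : v3 R) : bool := u.1.1 + u.1.2 + u.2 == 0.

Definition pos_roots (R : realFieldType) : seq (v3 R) :=
  [:: mkv 1 (-1) 0; mkv (-1) 0 1; mkv 0 (-1) 1;
      mkv (-2) 1 1; mkv (-1) (-1) 2; mkv 1 (-2) 1].
Definition g2roots (R : realFieldType) : seq (v3 R) :=
  pos_roots R ++ map vopp (pos_roots R).

Definition pos_compact_roots (R : realFieldType) : seq (v3 R) :=
  [:: mkv 1 (-1) 0; mkv (-1) (-1) 2].
Definition compact_roots (R : realFieldType) : seq (v3 R) :=
  pos_compact_roots R ++ map vopp (pos_compact_roots R).

Definition kdom {R : realFieldType} (H : v3 R) : bool :=
  all (fun a => 0 <= ip a H) (pos_compact_roots R).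

Definition l_roots {R : realFieldType} (H : v3 R) : seq (v3 R) :=
  [seq a <- g2roots R | ip a H == 0].
Definition u_roots {R : realFieldType} (H : v3 R) : seq (v3 R) :=
  [seq a <- g2roots R | 0 < ip a H].
(* q is determined by (and identified with) its set of roots, listed in the
   fixed order of [g2roots R]; two H give the same q iff q_roots agree *)
Definition q_roots {R : realFieldType} (H : v3 R) : seq (v3 R) :=
  [seq a <- g2roots R | 0 <= ip a H].

(* l_0 has no compact factors: there is no nonzero ideal of [l,l]
   (= a nonempty union S of irreducible components of the root system of l,
   i.e. S orthogonal to the remaining roots of l) consisting of compact roots.
   (For the equal-rank real form with compact Cartan t_0, a simple ideal of l_0
   is compact iff all its roots are compact.) *)
Definition noCompactFactors {R : realFieldType} (H : v3 R) : Prop :=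
  ~ (exists S : seq (v3 R),
       [/\ S != [::],
           {subset S <= l_roots H},
           {subset S <= compact_roots R} &
           forall a b, a \in S -> b \in l_roots H -> b \notin S -> ip a b = 0]).

Definition refl {R : realFieldType} (a mu : v3 R) : v3 R :=
  vsub mu (vscale (2 * ip mu a / ip a a) a).

Definition rho1 (R : realFieldType) : v3 R := mkv (-1) (-2) 3.
Definition rho2 (R : realFieldType) : v3 R := mkv 1 (-3) 2.
Definition rho3 (R : realFieldType) : v3 R := mkv 2 (-3) 1.

Inductive in_Wrho (R : realFieldType) : v3 R -> Prop :=
| Wrho_base : in_Wrho (rho1 R)
| Wrho_step : forall a mu, a \in g2roots R -> in_Wrho mu -> in_Wrho (refl a mu).

Definition face {R : realFieldType} (H mu : v3 R) : Prop :=
  in_Wrho mu /\ (forall nu, in_Wrho nu -> ip nu H <= ip mu H).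

Definition dirac {R : realFieldType} (H mu : v3 R) : Prop := face H mu /\ kdom mu.

Definition Hq1 (R : realFieldType) : v3 R := mkv 1 (-2) 1.
Definition Hq2 (R : realFieldType) : v3 R := mkv 0 (-1) 1.
Definition H0 (R : realFieldType) : v3 R := mkv 0 0 0.

Definition Hlist (R : realFieldType) : seq (v3 R) :=
  [:: rho1 R; rho2 R; rho3 R; H0 R; Hq1 R; Hq2 R].

(* All the data (roots, rho, the six H) have integer coordinates, so every
   notion of the statement is transferred to integer triples, where it is
   decided by computation.  The orbit W rho has twelve elements, listed by
   reflection words and shown closed under the twelve root reflections, so
   faces are maxima over a finite list.  For the classification, q only
   depends on the signs of the roots on H.  Inside C_k, the walls H1 = H2
   (H <> 0) and H1 + H2 = 0 (H1 <> H2) give l = t + (one compact root pair),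
   a compact factor; off them, the signs of H1 and of H2 + 2 H1 sort H into
   the six listed cases. *)
From HB Require Import structures.
From mathcomp Require Import all_boot all_order all_algebra lra.
Import Order.TTheory GRing.Theory Num.Theory.
Local Open Scope ring_scope.

Definition int3 := (int * int * int)%type.

Definition ipZ (u v : int3) : int := u.1.1 * v.1.1 + u.1.2 * v.1.2 + u.2 * v.2.

Definition mkvt {R : realFieldType} (t : int3) : v3 R := mkv t.1.1 t.1.2 t.2.

Definition rootsZ : seq int3 :=
  [:: (1,-1,0); (-1,0,1); (0,-1,1); (-2,1,1); (-1,-1,2); (1,-2,1);
      (-1,1,0); (1,0,-1); (0,1,-1); (2,-1,-1); (1,1,-2); (-1,2,-1)].

Definition compactZ : seq int3 := [:: (1,-1,0); (-1,-1,2); (-1,1,0); (1,1,-2)].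

Definition HlistZ : seq int3 :=
  [:: (-1,-2,3); (1,-3,2); (2,-3,1); (0,0,0); (1,-2,1); (0,-1,1)].

Definition lZ (h : int3) : seq int3 := [seq t <- rootsZ | ipZ t h == 0].
Definition qZ (h : int3) : seq int3 := [seq t <- rootsZ | 0 <= ipZ t h].

Definition kdomZ (s : int3) : bool :=
  all (fun a => 0 <= ipZ a s) [:: (1,-1,0); (-1,-1,2)].

(* Decidable sufficient condition for [noCompactFactors]: each compact root of
   l is non-orthogonal to some noncompact root of l. *)
Definition noCompactFactorsZ (h : int3) : bool :=
  all (fun c => (c \in lZ h) ==>
                has (fun b => (b \notin compactZ) && (ipZ c b != 0)) (lZ h))
      compactZ.

(* [%/] is floor division: [okstep t s] says that the Cartan integer
   2 <s,t> / <t,t> is computed exactly, so that [reflZ] is the reflection. *)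
Definition okstep (t s : int3) : bool :=
  (ipZ t t != 0) && (((2 * ipZ s t) %/ ipZ t t)%Z * ipZ t t == 2 * ipZ s t).

Definition reflZ (t s : int3) : int3 :=
  let c := ((2 * ipZ s t) %/ ipZ t t)%Z in
  (s.1.1 - c * t.1.1, s.1.2 - c * t.1.2, s.2 - c * t.2).

Fixpoint walk (ts : seq int3) : int3 :=
  if ts is t :: ts' then reflZ t (walk ts') else (-1,-2,3).

Fixpoint okword (ts : seq int3) : bool :=
  if ts is t :: ts' then [&& t \in rootsZ, okstep t (walk ts') & okword ts']
  else true.

Definition wordsZ : seq (seq int3) :=
  [:: [::]; [:: (1,-1,0)]; [:: (-1,0,1)]; [:: (0,-1,1)]; [:: (-2,1,1)];
      [:: (-1,-1,2)]; [:: (1,-2,1)]; [:: (-1,0,1); (1,-1,0)];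
      [:: (0,-1,1); (1,-1,0)]; [:: (-2,1,1); (1,-1,0)];
      [:: (-1,-1,2); (1,-1,0)]; [:: (1,-2,1); (1,-1,0)]].

Definition WrhoZ : seq int3 := map walk wordsZ.

Definition faceZ (h : int3) : seq int3 :=
  [seq s <- WrhoZ | all (fun s' => ipZ s' h <= ipZ s h) WrhoZ].

Definition diracZ (h : int3) : seq int3 := [seq s <- faceZ h | kdomZ s].

Lemma okword_wordsZ : all okword wordsZ.
Proof. by []. Qed.

Lemma WrhoZ_refl_closed :
  all (fun t => all (fun s => okstep t s && (reflZ t s \in WrhoZ)) WrhoZ) rootsZ.
Proof. by vm_compute. Qed.

Lemma forall_rootsZ (P : int3 -> Prop) :
  P (1,-1,0) -> P (-1,0,1) -> P (0,-1,1) -> P (-2,1,1) -> P (-1,-1,2) ->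
  P (1,-2,1) -> P (-1,1,0) -> P (1,0,-1) -> P (0,1,-1) -> P (2,-1,-1) ->
  P (1,1,-2) -> P (-1,2,-1) ->
  forall t, t \in rootsZ -> P t.
Proof.
move=> p1 p2 p3 p4 p5 p6 p7 p8 p9 p10 p11 p12 t; rewrite /rootsZ !inE.
by repeat (case/orP => [/eqP->//|]); move/eqP->.
Qed.

Lemma mem_seq1P (T : eqType) (x a : T) : x \in [:: a] <-> x = a.
Proof. by rewrite mem_seq1; split => /eqP. Qed.

Lemma mem_seq2P (T : eqType) (x a b : T) : x \in [:: a; b] <-> x = a \/ x = b.
Proof. by rewrite mem_seq2; split => [/orP[]/eqP|[]->]; rewrite ?eqxx ?orbT; auto. Qed.

Lemma mem_seq3P (T : eqType) (x a b c : T) :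
  x \in [:: a; b; c] <-> [\/ x = a, x = b | x = c].
Proof.
rewrite mem_seq3; split => [/or3P[]/eqP|[]->]; rewrite ?eqxx ?orbT //; by constructor.
Qed.

Section IntegerModel.
Variable R : realFieldType.

Lemma mkvt_inj : injective (@mkvt R).
Proof.
by move=> [[a b] c] [[a' b'] c'] [/intr_inj -> /intr_inj -> /intr_inj ->].
Qed.

Lemma mem_map_mkvt (s : seq int3) t : (@mkvt R t \in map mkvt s) = (t \in s).
Proof. exact: (mem_map mkvt_inj). Qed.

Lemma ip_mkvt s t : ip (@mkvt R s) (mkvt t) = (ipZ s t)%:~R.
Proof. by rewrite /ip /ipZ /= !intrD !intrM. Qed.

Lemma in_t_mkvt h : in_t (@mkvt R h) = (h.1.1 + h.1.2 + h.2 == 0).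
Proof. by rewrite /in_t /= -!intrD intr_eq0. Qed.

Lemma g2roots_mkvt : g2roots R = map mkvt rootsZ.
Proof. by rewrite /g2roots /= /vopp /mkvt /mkv /= !intrN !opprK ?oppr0. Qed.

Lemma compact_roots_mkvt : compact_roots R = map mkvt compactZ.
Proof. by rewrite /compact_roots /= /vopp /mkvt /mkv /= !intrN !opprK ?oppr0. Qed.

Lemma Hlist_mkvt : Hlist R = map mkvt HlistZ.
Proof. by []. Qed.

Lemma kdom_mkvt s : kdom (@mkvt R s) = kdomZ s.
Proof.
rewrite /kdom (_ : pos_compact_roots R = map mkvt [:: (1,-1,0); (-1,-1,2)]) //.
by rewrite all_map; apply: eq_all => a /=; rewrite ip_mkvt ler0z.
Qed.

Lemma l_roots_mkvt h : l_roots (@mkvt R h) = map mkvt (lZ h).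
Proof.
rewrite /l_roots g2roots_mkvt filter_map; congr map; apply: eq_filter => t /=.
by rewrite ip_mkvt intr_eq0.
Qed.

Lemma q_roots_mkvt h : q_roots (@mkvt R h) = map mkvt (qZ h).
Proof.
rewrite /q_roots g2roots_mkvt filter_map; congr map; apply: eq_filter => t /=.
by rewrite ip_mkvt ler0z.
Qed.

Lemma refl_mkvt t s : okstep t s -> refl (@mkvt R t) (mkvt s) = mkvt (reflZ t s).
Proof.
case/andP=> nz /eqP e; set c := ((2 * ipZ s t) %/ ipZ t t)%Z in e *.
have nzR : (ipZ t t)%:~R != 0 :> R by rewrite intr_eq0.
have cartan : 2 * ip (mkvt s) (mkvt t) / ip (mkvt t) (mkvt t) = c%:~R :> R.
  by rewrite !ip_mkvt; apply: (mulIf nzR); rewrite divfK // -intrM e intrM.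
by rewrite /refl cartan /vsub /vscale /mkvt /mkv /reflZ /= -/c !intrB !intrM.
Qed.

Lemma in_Wrho_walk ts : okword ts -> in_Wrho (@mkvt R (walk ts)).
Proof.
elim: ts => [|t ts IH] /=; first by constructor.
case/and3P=> tr ok ow; rewrite -refl_mkvt //.
by apply: Wrho_step; [rewrite g2roots_mkvt mem_map_mkvt | exact: IH].
Qed.

Lemma in_WrhoE (mu : v3 R) : in_Wrho mu <-> mu \in map mkvt WrhoZ.
Proof.
split.
  elim=> [|a m]; first exact: (@map_f _ _ mkvt WrhoZ (-1,-2,3)).
  rewrite g2roots_mkvt => /mapP[t tr ->] _ /mapP[s sW ->].
  have /andP[ok sin] := allP (allP WrhoZ_refl_closed t tr) s sW.
  by rewrite refl_mkvt // mem_map_mkvt.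
case/mapP=> s /mapP[w wi ->] ->.
exact/in_Wrho_walk/(allP okword_wordsZ).
Qed.

Lemma faceE h mu : face (@mkvt R h) mu <-> mu \in map mkvt (faceZ h).
Proof.
rewrite /face; split.
  case=> /in_WrhoE/mapP[s sW ->] top; rewrite mem_map_mkvt mem_filter sW andbT.
  apply/allP => s' s'W; rewrite -(ler_int R) -!ip_mkvt.
  by apply/top/in_WrhoE; rewrite mem_map_mkvt.
case/mapP=> s; rewrite mem_filter => /andP[/allP top sW] ->.
split=> [|nu /in_WrhoE/mapP[s' s'W ->]]; first by apply/in_WrhoE; apply: map_f.
by rewrite !ip_mkvt ler_int top.
Qed.

Lemma diracE h mu : dirac (@mkvt R h) mu <-> mu \in map mkvt (diracZ h).
Proof.
rewrite /dirac faceE; split.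
  by case=> /mapP[s sf ->]; rewrite kdom_mkvt mem_map_mkvt mem_filter => ->.
case/mapP=> s; rewrite mem_filter => /andP[k sf] ->.
by rewrite kdom_mkvt mem_map_mkvt.
Qed.

Lemma noCompactFactors_mkvt h : noCompactFactorsZ h -> noCompactFactors (@mkvt R h).
Proof.
move=> chk [[|a S] [//= _ Sl Sc Sorth]].
have := Sl a (mem_head _ _); rewrite l_roots_mkvt => /mapP[c cl ac]; subst a.
have := Sc _ (mem_head _ _); rewrite compact_roots_mkvt mem_map_mkvt => cc.
have /hasP[b bl /andP[bnc nz]] := implyP (allP chk c cc) cl.
have bS : mkvt b \notin mkvt c :: S.
  by apply/negP => /Sc; rewrite compact_roots_mkvt mem_map_mkvt (negbTE bnc).
have := Sorth _ _ (mem_head _ _) _ bS.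
by rewrite l_roots_mkvt mem_map_mkvt ip_mkvt bl => /(_ isT) /eqP; rewrite intr_eq0 (negPf nz).
Qed.

(* The whole of l is then an ideal of compact roots. *)
Lemma compact_wall_factor (H : v3 R) c :
  c \in compactZ -> ip (mkvt c) H = 0 ->
  (forall t, t \in rootsZ -> ip (mkvt t) H = 0 -> t \in compactZ) ->
  ~ noCompactFactors H.
Proof.
move=> cc cH lc; apply; exists (l_roots H); split=> [||a|a b _ -> //].
- have : mkvt c \in l_roots H.
    have cr : c \in rootsZ by move: c cc {cH lc}; apply/allP.
    by rewrite mem_filter cH eqxx g2roots_mkvt mem_map_mkvt.
  by case: (l_roots H).
- by [].
- rewrite mem_filter g2roots_mkvt => /andP[/eqP aH /mapP[t tr at_]]; subst a.
  by rewrite compact_roots_mkvt mem_map_mkvt lc.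
Qed.

Lemma q_roots_sign (H : v3 R) h :
  (forall t, t \in rootsZ ->
     if 0 <= ipZ t h then 0 <= ip (mkvt t) H else ip (mkvt t) H < 0) ->
  q_roots H = q_roots (mkvt h).
Proof.
move=> sgn; rewrite /q_roots g2roots_mkvt !filter_map; congr map.
apply: eq_in_filter => t tr /=; rewrite ip_mkvt ler0z; move: (sgn t tr).
by case: ifP => // _; rewrite ltNge => /negPf.
Qed.

Lemma dirac_distinct h h' :
  has (fun s => s \notin diracZ h') (diracZ h) ->
  ~ (forall mu, dirac (@mkvt R h) mu <-> dirac (mkvt h') mu).
Proof.
case/hasP=> s sd sn E; move: ((E (mkvt s)).1).
by rewrite !diracE !mem_map_mkvt sd (negPf sn) => /(_ isT).
Qed.

Lemma borel_case h :
  lZ h = [::] -> faceZ h = [:: h] -> diracZ h = [:: h] ->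
  [/\ l_roots (@mkvt R h) = [::],
      (forall mu, face (@mkvt R h) mu <-> mu = mkvt h) &
      (forall mu, dirac (@mkvt R h) mu <-> mu = mkvt h)].
Proof.
move=> l f d; split=> [|mu|mu]; first by rewrite l_roots_mkvt l.
- by rewrite faceE f; exact: mem_seq1P.
- by rewrite diracE d; exact: mem_seq1P.
Qed.

End IntegerModel.

Lemma classification (R : realFieldType) (H : v3 R) :
  in_t H -> kdom H -> noCompactFactors H ->
  exists2 H', H' \in Hlist R & q_roots H = q_roots H'.
Proof.
case: H => [[x y] z] /eqP; rewrite /kdom /= /ip /= => tH /andP[k1 /andP[k2 _]] ncf.
have yx : y <= x by lra.
have xy : x + y <= 0 by lra.
have pick h : h \in HlistZ ->
    (forall t, t \in rootsZ ->
       if 0 <= ipZ t h then 0 <= ip (mkvt t) (x, y, z) else ip (mkvt t) (x, y, z) < 0) ->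
    exists2 H', H' \in Hlist R & q_roots (x, y, z) = q_roots H'.
  by move=> hl /q_roots_sign; exists (mkvt h); rewrite // Hlist_mkvt mem_map_mkvt.
have [exy | nexy] := eqVneq x y.
  have [x0 | xn0] := eqVneq x 0.
    by apply: (pick (0,0,0)) => //; apply: forall_rootsZ; rewrite /ip /=; lra.
  exfalso; apply: (@compact_wall_factor R _ (1,-1,0)) ncf => //.
    by rewrite /ip /=; lra.
  by apply: forall_rootsZ; rewrite /ip /= => e; first [by [] | lra].
have [sxy | nsxy] := eqVneq (x + y) 0.
  exfalso; apply: (@compact_wall_factor R _ (-1,-1,2)) ncf => //.
    by rewrite /ip /=; lra.
  by apply: forall_rootsZ; rewrite /ip /= => e; first [by [] | lra].
have [xlt | xgt | x0] := ltgtP x 0.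
- by apply: (pick (-1,-2,3)) => //; apply: forall_rootsZ; rewrite /ip /=; lra.
- have [ylt | ygt | ye] := ltgtP y (-2 * x).
  + by apply: (pick (1,-3,2)) => //; apply: forall_rootsZ; rewrite /ip /=; lra.
  + by apply: (pick (2,-3,1)) => //; apply: forall_rootsZ; rewrite /ip /=; lra.
  + by apply: (pick (1,-2,1)) => //; apply: forall_rootsZ; rewrite /ip /=; lra.
- by apply: (pick (0,-1,1)) => //; apply: forall_rootsZ; rewrite /ip /=; lra.
Qed.

Lemma listed_admissible (R : realFieldType) H :
  H \in Hlist R -> [/\ in_t H, kdom H & noCompactFactors H].
Proof.
rewrite Hlist_mkvt => /mapP[h hl ->].
have : all (fun h => [&& h.1.1 + h.1.2 + h.2 == 0, kdomZ h & noCompactFactorsZ h])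
         HlistZ by vm_compute.
case/allP/(_ h hl)/and3P=> tH kH ncH.
by rewrite in_t_mkvt kdom_mkvt; split=> //; exact: noCompactFactors_mkvt.
Qed.

Lemma listed_q_roots_uniq (R : realFieldType) : uniq (map q_roots (Hlist R)).
Proof.
rewrite Hlist_mkvt -map_comp (eq_map (@q_roots_mkvt R)) map_comp.
by rewrite (map_inj_uniq (inj_map (@mkvt_inj R))); vm_compute.
Qed.

Lemma borel_cases (R : realFieldType) r : r \in [:: rho1 R; rho2 R; rho3 R] ->
  [/\ l_roots r = [::], (forall mu, face r mu <-> mu = r) &
      (forall mu, dirac r mu <-> mu = r)].
Proof.
case/mem_seq3P=> ->.
- by apply: (@borel_case R (-1,-2,3)); vm_compute.
- by apply: (@borel_case R (1,-3,2)); vm_compute.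
- by apply: (@borel_case R (2,-3,1)); vm_compute.
Qed.

Lemma trivial_case (R : realFieldType) :
  l_roots (H0 R) = g2roots R /\
  forall mu, dirac (H0 R) mu <-> [\/ mu = rho1 R, mu = rho2 R | mu = rho3 R].
Proof.
change (H0 R) with (@mkvt R (0,0,0)).
split; first by rewrite l_roots_mkvt g2roots_mkvt; congr map; vm_compute.
move=> mu; rewrite diracE.
have -> : diracZ (0,0,0) = [:: (-1,-2,3); (1,-3,2); (2,-3,1)] by vm_compute.
exact: mem_seq3P.
Qed.

Lemma q1_case (R : realFieldType) :
  [/\ (forall a, a \in l_roots (Hq1 R) <-> a = mkv (-1) 0 1 \/ a = mkv 1 0 (-1)),
      (forall mu, face (Hq1 R) mu <-> mu = mkv 2 (-3) 1 \/ mu = mkv 1 (-3) 2) &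
      (forall mu, dirac (Hq1 R) mu <-> mu = rho2 R \/ mu = rho3 R)].
Proof.
change (Hq1 R) with (@mkvt R (1,-2,1)); split=> x.
- rewrite l_roots_mkvt (_ : lZ _ = [:: (-1,0,1); (1,0,-1)]); last by vm_compute.
  exact: mem_seq2P.
- rewrite faceE (_ : faceZ _ = [:: (1,-3,2); (2,-3,1)]); last by vm_compute.
  by rewrite mem_seq2P; split=> -[]->; auto.
- rewrite diracE (_ : diracZ _ = [:: (1,-3,2); (2,-3,1)]); last by vm_compute.
  exact: mem_seq2P.
Qed.

Lemma q2_case (R : realFieldType) :
  [/\ (forall a, a \in l_roots (Hq2 R) <-> a = mkv (-2) 1 1 \/ a = mkv 2 (-1) (-1)),
      (forall mu, face (Hq2 R) mu <-> mu = mkv (-1) (-2) 3 \/ mu = mkv 1 (-3) 2) &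
      (forall mu, dirac (Hq2 R) mu <-> mu = rho1 R \/ mu = rho2 R)].
Proof.
change (Hq2 R) with (@mkvt R (0,-1,1)); split=> x.
- rewrite l_roots_mkvt (_ : lZ _ = [:: (-2,1,1); (2,-1,-1)]); last by vm_compute.
  exact: mem_seq2P.
- rewrite faceE (_ : faceZ _ = [:: (-1,-2,3); (1,-3,2)]); last by vm_compute.
  exact: mem_seq2P.
- rewrite diracE (_ : diracZ _ = [:: (-1,-2,3); (1,-3,2)]); last by vm_compute.
  exact: mem_seq2P.
Qed.

Lemma listed_dirac_distinct (R : realFieldType) H H' :
  H \in Hlist R -> H' \in Hlist R -> H != H' ->
  ~ (forall mu, dirac H mu <-> dirac H' mu).
Proof.
rewrite Hlist_mkvt => /mapP[h hl ->] /mapP[h' hl' ->] ne.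
have : all (fun h => all (fun h' => (h != h') ==>
          has (fun s => s \notin diracZ h') (diracZ h) ||
          has (fun s => s \notin diracZ h) (diracZ h')) HlistZ) HlistZ.
  by vm_compute.
have nh : h != h' by apply: contraNneq ne => ->.
move/allP/(_ h hl)/allP/(_ h' hl'); rewrite nh /=.
case/orP=> [|d E]; first exact: dirac_distinct.
by apply: (@dirac_distinct R h' h d) => mu; exact: iff_sym.
Qed.

Theorem theorem6p1 (R : realFieldType) :
  (forall H : v3 R, in_t H -> kdom H -> noCompactFactors H ->
     exists2 H', H' \in Hlist R & q_roots H = q_roots H')
  /\
  (forall H', H' \in Hlist R -> [/\ in_t H', kdom H' & noCompactFactors H'])
  /\
  uniq (map q_roots (Hlist R))
  /\
  (forall r, r \in [:: rho1 R; rho2 R; rho3 R] ->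
     [/\ l_roots r = [::],
         (forall mu, face r mu <-> mu = r) &
         (forall mu, dirac r mu <-> mu = r)])
  /\
  (l_roots (H0 R) = g2roots R /\
   forall mu, dirac (H0 R) mu <-> [\/ mu = rho1 R, mu = rho2 R | mu = rho3 R])
  /\
  [/\ (forall a, a \in l_roots (Hq1 R) <-> a = mkv (-1) 0 1 \/ a = mkv 1 0 (-1)),
      (forall mu, face (Hq1 R) mu <-> mu = mkv 2 (-3) 1 \/ mu = mkv 1 (-3) 2) &
      (forall mu, dirac (Hq1 R) mu <-> mu = rho2 R \/ mu = rho3 R)]
  /\
  [/\ (forall a, a \in l_roots (Hq2 R) <-> a = mkv (-2) 1 1 \/ a = mkv 2 (-1) (-1)),
      (forall mu, face (Hq2 R) mu <-> mu = mkv (-1) (-2) 3 \/ mu = mkv 1 (-3) 2) &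
      (forall mu, dirac (Hq2 R) mu <-> mu = rho1 R \/ mu = rho2 R)]
  /\
  (forall H H', H \in Hlist R -> H' \in Hlist R -> H != H' ->
     ~ (forall mu, dirac H mu <-> dirac H' mu)).
Proof.
split; first exact: classification.
split; first exact: listed_admissible.
split; first exact: listed_q_roots_uniq.
split; first exact: borel_cases.
split; first exact: trivial_case.
split; first exact: q1_case.
split; first exact: q2_case.
exact: listed_dirac_distinct.
Qed.
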